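(* There is an absolute constant $C_1>0$ such that the following holds. Let $n\ge 2$, $p\ge 1$, $d\ge 1$, let $(x_1,y_1),\ldots,(x_n,y_n)\in \mathbb{S}^{d-1}\times\{-1,1\}$ be any dataset and let $\theta^{(1)}$ be any initial parameter vector. Set $h=1/p$, $L_1:=L(\theta^{(1)})$, and \[ \widetilde{Q}_1=\min\left\{\frac{1}{30pL_1\log^2(1/L_1)},\ \frac{108\,\lVert V^{(1)}\rVert^2}{125\,L_1\log^4(1/L_1)},\ \frac{e^2}{120p}\right\},\qquad \widetilde{Q}_2(Q_1)=\frac{125\,Q_1L_1\log^4(1/L_1)}{216\,\lVert V^{(1)}\rVert^2}. \] Let $Q_1$ be any positive number with $Q_1\le \widetilde{Q}_1$ and $Q_2$ any positive number with $Q_2\le\widetilde{Q}_2(Q_1)$. Let $\theta^{(t+1)}=\theta^{(t)}-\alpha_t\nabla_\theta L(\theta^{(t)})$ for $t\ge 1$ with step-sizes $\alpha_t=Q_1\log^2(1/L(\theta^{(t)}))$. If $L(\theta^{(1)})\le \frac{1}{n^{1+C_1}}$, then for all $t\ge 1$, \[ L(\theta^{(t)})\le \frac{L(\theta^{(1)})}{Q_2\,(t-1)+1}. \]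
   Context: $\mathbb{S}^{d-1}$ is the set of unit vectors in $\mathbb{R}^d$; $\log$ is the natural logarithm. The Huberized ReLU with bandwidth $h>0$ is $\phi(z)=0$ for $z<0$, $\phi(z)=z^2/(2h)$ for $z\in[0,h]$, $\phi(z)=z-h/2$ for $z>h$. The network has $2p$ hidden units with input weights $v_i\in\mathbb{R}^d$ and biases $b_i\in\mathbb{R}$, $i\in[2p]$; the output weights are fixed (not trained): $u_1=\cdots=u_p=1$, $u_{p+1}=\cdots=u_{2p}=-1$. The trainable parameters are $\theta=(v_1,b_1,\ldots,v_{2p},b_{2p})$ and the network computes $f_\theta(x)=\sum_{i=1}^{2p}u_i\phi(v_i\cdot x+b_i)$. The training loss is $L(\theta)=\frac1n\sum_{s=1}^n\ln(1+\exp(-y_sf_\theta(x_s)))$. $V^{(1)}$ denotes the $2p\times(d+1)$ matrix whose $i$-th row is $(v_i^{(1)},b_i^{(1)})$ formed from the parameters $\theta^{(1)}$, and $\lVert V^{(1)}\rVert$ is its Frobenius norm. *)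

From Stdlib Require Import Reals Lra Lia.
From Coquelicot Require Import Coquelicot.
Open Scope R_scope.

Fixpoint fsum (n : nat) (f : nat -> R) : R :=
  match n with
  | O => 0
  | S m => fsum m f + f m
  end.

Definition huber_relu (h z : R) : R :=
  if Rlt_dec z 0 then 0
  else if Rle_dec z h then z ^ 2 / (2 * h)
  else z - h / 2.

(* Parameters theta = (v_i, b_i)_{i < 2p}: v i j is the j-th coordinate of v_i
   (only i < 2p, j < d matter). *)
Record params := mkParams { pv : nat -> nat -> R ; pb : nat -> R }.

Definition out_weight (p i : nat) : R := if Nat.ltb i p then 1 else -1.

Definition network (p d : nat) (th : params) (x : nat -> R) : R :=
  fsum (2 * p) (fun i =>
    out_weight p i *
    huber_relu (/ INR p) (fsum d (fun j => pv th i j * x j) + pb th i)).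

Definition loss (n p d : nat) (X : nat -> nat -> R) (Y : nat -> R)
  (th : params) : R :=
  / INR n * fsum n (fun s => ln (1 + exp (- (Y s * network p d th (X s))))).

Definition set_v (th : params) (i j : nat) (z : R) : params :=
  mkParams (fun i' j' => if andb (Nat.eqb i' i) (Nat.eqb j' j) then z else pv th i' j')
           (pb th).
Definition set_b (th : params) (i : nat) (z : R) : params :=
  mkParams (pv th) (fun i' => if Nat.eqb i' i then z else pb th i').

Definition grad_v (F : params -> R) (th : params) (i j : nat) : R :=
  Derive (fun z => F (set_v th i j z)) (pv th i j).
Definition grad_b (F : params -> R) (th : params) (i : nat) : R :=
  Derive (fun z => F (set_b th i z)) (pb th i).

(* squared Frobenius norm of the 2p x (d+1) matrix with rows (v_i, b_i) *)
Definition frob_sq (p d : nat) (th : params) : R :=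
  fsum (2 * p) (fun i => fsum d (fun j => pv th i j ^ 2) + pb th i ^ 2).

(* While [L_t <= L_1 <= n^-(1+C1)], every sample has a large margin: its logistic
   slope is within 5% of its loss and its margin is at least about [ln (1/L_t)].
   Since each Huberized unit is [1/h = p]-smooth, a step [al = Q1 ln^2 (1/L_t)]
   with [p al L_t <= 1/30] decreases the loss by at least [3/4 al |grad L|^2].
   The large margins also make the alignment [P = <-grad L, V>] at least
   [(19/20)^2 L ln (1/L)], and [|grad L| >= P / |V|].  By induction the ratio
   [|V_t|^2 / ln^4 (1/L_t)] never exceeds its initial value (the norm grows by
   [2 al P + al^2 |grad L|^2], which the growth of [ln^4 (1/L_t)] absorbs), and then
   the decrease is at least [Q2 L_t^2 / L_1], i.e. [1/L_(t+1) >= 1/L_t + Q2/L_1]. *)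

From Stdlib Require Import Reals Lra Lia Psatz.
From Coquelicot Require Import Coquelicot.
Open Scope R_scope.

(** * Finite sums *)

Lemma fsum_ext N f g : (forall k, (k < N)%nat -> f k = g k) -> fsum N f = fsum N g.
Proof.
  induction N as [|N IH]; intros H; cbn [fsum]; [reflexivity|].
  rewrite IH, H; auto with arith.
Qed.

Lemma fsum_plus N f g : fsum N (fun k => f k + g k) = fsum N f + fsum N g.
Proof. induction N as [|N IH]; cbn [fsum]; [lra|rewrite IH; ring]. Qed.

Lemma fsum_minus N f g : fsum N (fun k => f k - g k) = fsum N f - fsum N g.
Proof. induction N as [|N IH]; cbn [fsum]; [lra|rewrite IH; ring]. Qed.

Lemma fsum_opp N f : fsum N (fun k => - f k) = - fsum N f.
Proof. induction N as [|N IH]; cbn [fsum]; [lra|rewrite IH; ring]. Qed.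

Lemma fsum_scal_l N c f : fsum N (fun k => c * f k) = c * fsum N f.
Proof. induction N as [|N IH]; cbn [fsum]; [lra|rewrite IH; ring]. Qed.

Lemma fsum_scal_r N c f : fsum N (fun k => f k * c) = fsum N f * c.
Proof. induction N as [|N IH]; cbn [fsum]; [lra|rewrite IH; ring]. Qed.

Lemma fsum_const N c : fsum N (fun _ => c) = INR N * c.
Proof. induction N as [|N IH]; cbn [fsum]; [simpl; ring|rewrite IH, S_INR; ring]. Qed.

Lemma fsum_le N f g : (forall k, (k < N)%nat -> f k <= g k) -> fsum N f <= fsum N g.
Proof.
  induction N as [|N IH]; intros H; cbn [fsum]; [lra|].
  apply Rplus_le_compat; [apply IH; auto with arith|apply H; lia].
Qed.

Lemma fsum_nonneg N f : (forall k, (k < N)%nat -> 0 <= f k) -> 0 <= fsum N f.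
Proof.
  intros H. replace 0 with (fsum N (fun _ => 0)) by (rewrite fsum_const; ring).
  now apply fsum_le.
Qed.

Lemma fsum_term_le N f m :
  (forall k, (k < N)%nat -> 0 <= f k) -> (m < N)%nat -> f m <= fsum N f.
Proof.
  induction N as [|N IH]; intros H Hm; [lia|cbn [fsum]].
  destruct (Nat.eq_dec m N) as [->|Hne].
  - assert (0 <= fsum N f) by (apply fsum_nonneg; auto with arith). lra.
  - assert (f m <= fsum N f) by (apply IH; auto with arith; lia).
    assert (0 <= f N) by auto. lra.
Qed.

Lemma fsum_indicator N m c : (m < N)%nat ->
  fsum N (fun k => if Nat.eqb k m then c else 0) = c.
Proof.
  induction N as [|N IH]; intros Hm; [lia|cbn [fsum]].
  destruct (Nat.eq_dec m N) as [->|Hne].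
  - rewrite Nat.eqb_refl, (fsum_ext N _ (fun _ => 0)), fsum_const; [ring|].
    intros k Hk. destruct (Nat.eqb_spec k N); [lia|auto].
  - rewrite IH by lia. destruct (Nat.eqb_spec N m); [lia|ring].
Qed.

Lemma fsum_swap N M (f : nat -> nat -> R) :
  fsum N (fun i => fsum M (f i)) = fsum M (fun j => fsum N (fun i => f i j)).
Proof.
  induction N as [|N IH]; cbn [fsum].
  - rewrite fsum_const. ring.
  - rewrite IH, <- fsum_plus. reflexivity.
Qed.

Lemma discriminant_le A B C :
  0 <= B -> (forall t, 0 <= A - 2 * t * C + t * t * B) -> C * C <= A * B.
Proof.
  intros HB H. destruct (Req_dec B 0) as [->|HB0].
  - destruct (Req_dec C 0) as [->|HC]; [lra|].
    specialize (H ((A + 1) / (2 * C))).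
    replace (A - 2 * ((A + 1) / (2 * C)) * C + (A + 1) / (2 * C) * ((A + 1) / (2 * C)) * 0)
      with (-1) in H by (field; auto). lra.
  - specialize (H (C / B)).
    replace (A - 2 * (C / B) * C + C / B * (C / B) * B) with ((A * B - C * C) / B) in H
      by (field; auto).
    assert (0 < B) by lra.
    apply Rmult_le_compat_r with (r := B) in H; [|lra].
    replace ((A * B - C * C) / B * B) with (A * B - C * C) in H by (field; lra). lra.
Qed.

Lemma fsum_cauchy_schwarz_weighted N w a b : (forall k, (k < N)%nat -> 0 <= w k) ->
  fsum N (fun k => w k * a k * b k) * fsum N (fun k => w k * a k * b k)
  <= fsum N (fun k => w k * a k * a k) * fsum N (fun k => w k * b k * b k).
Proof.
  intros Hw. apply discriminant_le.
  - apply fsum_nonneg. intros k Hk. specialize (Hw k Hk). nra.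
  - intros t.
    replace (_ - _ + _) with (fsum N (fun k => w k * ((a k - t * b k) * (a k - t * b k)))).
    + apply fsum_nonneg. intros k Hk. apply Rmult_le_pos; [auto|apply Rle_0_sqr].
    + rewrite <- !fsum_scal_l, <- fsum_minus, <- fsum_plus. apply fsum_ext. intros; ring.
Qed.

Lemma fsum_cauchy_schwarz N a b :
  fsum N (fun k => a k * b k) * fsum N (fun k => a k * b k)
  <= fsum N (fun k => a k * a k) * fsum N (fun k => b k * b k).
Proof.
  pose proof (fsum_cauchy_schwarz_weighted N (fun _ => 1) a b (fun _ _ => Rle_0_1)) as H.
  cbv beta in H.
  rewrite (fsum_ext N (fun k => 1 * a k * b k) (fun k => a k * b k)),
    (fsum_ext N (fun k => 1 * a k * a k) (fun k => a k * a k)),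
    (fsum_ext N (fun k => 1 * b k * b k) (fun k => b k * b k)) in H by (intros; ring).
  exact H.
Qed.

Definition dsum (N M : nat) (F : nat -> nat -> R) : R := fsum N (fun i => fsum M (F i)).

Lemma dsum_ext N M F G : (forall i j, (i < N)%nat -> (j < M)%nat -> F i j = G i j) ->
  dsum N M F = dsum N M G.
Proof. intros H. apply fsum_ext. intros. apply fsum_ext. auto. Qed.

Lemma dsum_plus N M F G : dsum N M (fun i j => F i j + G i j) = dsum N M F + dsum N M G.
Proof. unfold dsum. rewrite <- fsum_plus. apply fsum_ext. intros. apply fsum_plus. Qed.

Lemma dsum_minus N M F G : dsum N M (fun i j => F i j - G i j) = dsum N M F - dsum N M G.
Proof. unfold dsum. rewrite <- fsum_minus. apply fsum_ext. intros. apply fsum_minus. Qed.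

Lemma dsum_scal_l N M c F : dsum N M (fun i j => c * F i j) = c * dsum N M F.
Proof. unfold dsum. rewrite <- fsum_scal_l. apply fsum_ext. intros. apply fsum_scal_l. Qed.

Lemma dsum_le N M F G : (forall i j, (i < N)%nat -> (j < M)%nat -> F i j <= G i j) ->
  dsum N M F <= dsum N M G.
Proof. intros H. apply fsum_le. intros. apply fsum_le. auto. Qed.

Lemma dsum_nonneg N M F : (forall i j, (i < N)%nat -> (j < M)%nat -> 0 <= F i j) ->
  0 <= dsum N M F.
Proof. intros H. apply fsum_nonneg. intros. apply fsum_nonneg. auto. Qed.

Lemma fsum_dsum_swap n N M (F : nat -> nat -> nat -> R) :
  fsum n (fun s => dsum N M (F s)) = dsum N M (fun i j => fsum n (fun s => F s i j)).
Proof. unfold dsum. rewrite fsum_swap. apply fsum_ext. intros. apply fsum_swap. Qed.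

Lemma dsum_cauchy_schwarz N M a b :
  dsum N M (fun i j => a i j * b i j) * dsum N M (fun i j => a i j * b i j)
  <= dsum N M (fun i j => a i j * a i j) * dsum N M (fun i j => b i j * b i j).
Proof.
  apply discriminant_le.
  - apply dsum_nonneg. intros. apply Rle_0_sqr.
  - intros t.
    replace (_ - _ + _) with (dsum N M (fun i j => (a i j - t * b i j) * (a i j - t * b i j))).
    + apply dsum_nonneg. intros. apply Rle_0_sqr.
    + rewrite <- !dsum_scal_l, <- dsum_minus, <- dsum_plus. apply dsum_ext. intros; ring.
Qed.

(** * Real inequalities and derivatives *)

Lemma ln_le_sub1 y : 0 < y -> ln y <= y - 1.
Proof. intros Hy. pose proof (exp_ineq1_le (ln y)). rewrite exp_ln in H by exact Hy. lra. Qed.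

Lemma ln_1_div x : 0 < x -> ln (1 / x) = - ln x.
Proof. intros Hx. rewrite Rdiv_1_l. now apply ln_Rinv. Qed.

Lemma exp_le_quadratic x : x <= 1/5 -> exp x <= 1 + x + 5/4 * (x * x).
Proof.
  intros Hx. pose proof (exp_ineq1_le (- x)).
  assert (Hinv : exp x * exp (- x) = 1) by (rewrite <- exp_plus, Rplus_opp_r; apply exp_0).
  pose proof (exp_pos x). pose proof (exp_pos (- x)).
  assert (exp x * (1 - x) <= 1) by nra.
  assert (1 <= (1 - x) * (1 + x + 5/4 * (x * x))) by nra.
  nra.
Qed.

Lemma sq_mul_exp_neg_le l : 0 <= l -> l * l * exp (- l) <= 4 / exp 2.
Proof.
  intros Hl. pose proof (exp_ineq1_le (l / 2 - 1)) as H1.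
  pose proof (exp_pos (l / 2 - 1)). pose proof (exp_pos 2).
  set (E := exp (l / 2 - 1)) in *.
  assert (HE : exp l = E * E * exp 2) by (unfold E; rewrite <- !exp_plus; f_equal; field).
  rewrite exp_Ropp, HE.
  replace (l * l * / (E * E * exp 2)) with ((l / 2) * (l / 2) / (E * E) * (4 / exp 2))
    by (field; repeat split; lra).
  rewrite <- (Rmult_1_l (4 / exp 2)) at 2.
  apply Rmult_le_compat_r; [apply Rlt_le, Rdiv_lt_0_compat; lra|].
  apply Rle_div_l; [nra|]. assert (0 <= l / 2 <= E) by lra. nra.
Qed.

Lemma pow4_add_ge l s : 0 <= l -> 0 <= s ->
  l * l * (l * l) + 4 * (l * l * l) * s <= (l + s) * (l + s) * ((l + s) * (l + s)).
Proof.
  intros Hl Hs.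
  assert (0 <= s * s * (6 * l * l + 4 * l * s + s * s)).
  { apply Rmult_le_pos; [nra|]. nra. }
  nra.
Qed.

Lemma is_derive_of_quadratic_error f a D K :
  (forall b, Rabs (f b - f a - D * (b - a)) <= K * ((b - a) * (b - a))) -> is_derive f a D.
Proof.
  intros H. apply is_derive_Reals. intros eps Heps.
  assert (HK : 0 <= K).
  { specialize (H (a + 1)). replace ((a + 1 - a) * (a + 1 - a)) with 1 in H by ring.
    pose proof (Rabs_pos (f (a + 1) - f a - D * (a + 1 - a))). lra. }
  exists (mkposreal (eps / (K + 1)) ltac:(apply Rdiv_lt_0_compat; lra)). simpl.
  intros h Hh Hlt. specialize (H (a + h)). replace (a + h - a) with h in H by ring.
  replace ((f (a + h) - f a) / h - D) with ((f (a + h) - f a - D * h) / h) by (field; auto).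
  assert (Habs : 0 < Rabs h) by (apply Rabs_pos_lt; auto).
  rewrite Rabs_div by auto. apply Rlt_div_l; [exact Habs|].
  assert (h * h = Rabs h * Rabs h) by (rewrite <- Rabs_mult, Rabs_right; nra).
  assert (Rabs h * (K + 1) < eps) by (apply Rlt_div_r in Hlt; lra).
  nra.
Qed.

Lemma is_derive_fsum N (f : nat -> R -> R) x df :
  (forall k, (k < N)%nat -> is_derive (f k) x (df k)) ->
  is_derive (fun z => fsum N (fun k => f k z)) x (fsum N df).
Proof.
  induction N as [|N IH]; intros H; cbn [fsum].
  - auto_derive; reflexivity.
  - apply (is_derive_plus (fun z => fsum N (fun k => f k z)) (f N));
      [apply IH; auto with arith|apply H; lia].
Qed.

Lemma is_derive_comp_R (f g : R -> R) x df dg :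
  is_derive f (g x) df -> is_derive g x dg -> is_derive (fun z => f (g z)) x (df * dg).
Proof.
  intros Hf Hg. replace (df * dg) with (scal dg df) by (rewrite Rmult_comm; reflexivity).
  exact (is_derive_comp f g x df dg Hf Hg).
Qed.

(** * The logistic loss and the Huberized ReLU *)

Definition logistic (m : R) : R := ln (1 + exp (- m)).

Definition logistic_slope (m : R) : R := / (1 + exp m).

Lemma logistic_slope_pos m : 0 < logistic_slope m.
Proof. apply Rinv_0_lt_compat. pose proof (exp_pos m). lra. Qed.

Lemma logistic_slope_le_logistic m : logistic_slope m <= logistic m.
Proof.
  unfold logistic_slope, logistic. pose proof (exp_pos m) as Hm.
  assert (Hy : 0 < / (1 + exp (- m))) by (apply Rinv_0_lt_compat; pose proof (exp_pos (- m)); lra).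
  pose proof (ln_le_sub1 _ Hy) as H. rewrite ln_Rinv in H by (pose proof (exp_pos (- m)); lra).
  replace (/ (1 + exp (- m)) - 1) with (- / (1 + exp m)) in H by (rewrite exp_Ropp; field; lra).
  lra.
Qed.

Lemma logistic_pos m : 0 < logistic m.
Proof. pose proof (logistic_slope_pos m). pose proof (logistic_slope_le_logistic m). lra. Qed.

Lemma is_derive_logistic m : is_derive logistic m (- logistic_slope m).
Proof.
  unfold logistic, logistic_slope. auto_derive.
  - pose proof (exp_pos (- m)). lra.
  - rewrite exp_Ropp. pose proof (exp_pos m). field. lra.
Qed.

(* From [ln y <= y - 1] and [exp (- D) <= 1 - D + 5/4 D^2]. *)
Lemma logistic_shift_le m D : - (1/5) <= D ->
  logistic (m + D) <= logistic m - logistic_slope m * D + 5/4 * logistic_slope m * (D * D).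
Proof.
  intros HD. unfold logistic, logistic_slope.
  pose proof (exp_pos m). pose proof (exp_pos (- m)). pose proof (exp_pos (- D)).
  replace (exp (- (m + D))) with (exp (- m) * exp (- D))
    by (rewrite <- exp_plus; f_equal; ring).
  assert (Hr : 0 < (1 + exp (- m) * exp (- D)) / (1 + exp (- m))) by (apply Rdiv_lt_0_compat; nra).
  pose proof (ln_le_sub1 _ Hr) as Hl. rewrite ln_div in Hl by nra.
  assert (Hq : exp (- D) <= 1 - D + 5/4 * (D * D))
    by (replace (1 - D + 5/4 * (D * D)) with (1 + - D + 5/4 * (- D * - D)) by ring;
        apply exp_le_quadratic; lra).
  assert (Hs : / (1 + exp m) = exp (- m) / (1 + exp (- m)))
    by (rewrite (exp_Ropp m); field; lra).
  replace ((1 + exp (- m) * exp (- D)) / (1 + exp (- m)) - 1)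
    with (/ (1 + exp m) * (exp (- D) - 1)) in Hl by (rewrite Hs; field; lra).
  assert (0 < / (1 + exp m)) by (apply Rinv_0_lt_compat; lra).
  assert (/ (1 + exp m) * (exp (- D) - 1) <= / (1 + exp m) * (- D + 5/4 * (D * D)))
    by (apply Rmult_le_compat_l; lra).
  lra.
Qed.

Lemma logistic_perturb_le m D Lin K : 0 <= K <= 1/225 -> Lin * Lin <= 4 * K ->
  Rabs (D - Lin) <= K ->
  logistic (m + D) <= logistic m - logistic_slope m * Lin + 15/2 * K * logistic_slope m.
Proof.
  intros HK HLin HE. apply Rabs_le_between in HE.
  assert (HLin1 : Lin * Lin <= 4 / 225) by lra.
  assert (Hlow : - (2/15) <= Lin) by nra.
  (* Young: [(Lin + E)^2 <= 11/10 Lin^2 + 11 E^2] *)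
  assert (HD2 : D * D <= 9/2 * K).
  { assert ((D - Lin) * (D - Lin) <= K * K) by nra.
    assert (0 <= (Lin / 10 - (D - Lin)) * (Lin / 10 - (D - Lin))) by apply Rle_0_sqr.
    nra. }
  pose proof (logistic_shift_le m D ltac:(lra)) as Hs.
  pose proof (logistic_slope_pos m) as Hsig.
  assert (logistic_slope m * (Lin - D) <= logistic_slope m * K) by (apply Rmult_le_compat_l; lra).
  assert (logistic_slope m * (D * D) <= logistic_slope m * (9/2 * K)) by (apply Rmult_le_compat_l; lra).
  nra.
Qed.

(* With [u = exp (- m)]: [logistic_slope m = u / (1 + u) >= u (1 - u)] and [logistic m <= u]. *)
Lemma logistic_small m B : logistic m <= B -> B <= 1/40 ->
  19/20 * logistic m <= logistic_slope m /\ - ln (2 * B) <= m.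
Proof.
  intros HlB HB. pose proof (logistic_slope_le_logistic m) as Hsl.
  pose proof (logistic_pos m).
  unfold logistic, logistic_slope in *. set (u := exp (- m)) in *.
  assert (Hu : 0 < u) by apply exp_pos.
  assert (Hsig : / (1 + exp m) = u / (1 + u))
    by (unfold u; rewrite exp_Ropp; pose proof (exp_pos m); field; lra).
  rewrite Hsig in *.
  assert (Hu2 : u <= 2 * B).
  { assert (u <= B * (1 + u)); [|nra].
    apply Rmult_le_compat_r with (r := 1 + u) in Hsl; [|lra].
    replace (u / (1 + u) * (1 + u)) with u in Hsl by (field; lra). nra. }
  assert (Hlu : ln (1 + u) <= u) by (pose proof (ln_le_sub1 (1 + u)); lra).
  split.
  - assert (u * (1 - u) <= u / (1 + u)); [|nra].
    apply (Rmult_le_reg_r (1 + u)); [lra|].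
    replace (u / (1 + u) * (1 + u)) with u by (field; lra). nra.
  - assert (ln u <= ln (2 * B)) by (apply ln_le; lra).
    unfold u in H0. rewrite ln_exp in H0. lra.
Qed.

Definition huber_relu_deriv (h z : R) : R :=
  if Rlt_dec z 0 then 0 else if Rle_dec z h then z / h else 1.

Lemma huber_relu_taylor h a b : 0 < h ->
  0 <= huber_relu h b - huber_relu h a - huber_relu_deriv h a * (b - a) <= (b - a) * (b - a) / (2 * h).
Proof.
  intros Hh. unfold huber_relu, huber_relu_deriv.
  destruct (Rlt_dec a 0); destruct (Rlt_dec b 0); try destruct (Rle_dec a h); try destruct (Rle_dec b h);
    split; apply (Rmult_le_reg_r (2 * h)); try lra; field_simplify; try lra;
    try nra; pose proof (Rle_0_sqr (b - a)); unfold Rsqr in *; nra.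
Qed.

Lemma huber_relu_deriv_bounds h a : 0 < h -> 0 <= huber_relu_deriv h a <= 1.
Proof.
  intros Hh. unfold huber_relu_deriv.
  destruct (Rlt_dec a 0); [lra|]. destruct (Rle_dec a h); [|lra].
  split; [apply Rdiv_le_0_compat; lra|apply Rle_div_l; lra].
Qed.

Lemma huber_relu_deriv_mul_sub h a : 0 < h ->
  0 <= huber_relu_deriv h a * a - huber_relu h a <= h / 2.
Proof.
  intros Hh. unfold huber_relu_deriv, huber_relu.
  destruct (Rlt_dec a 0); [lra|]. destruct (Rle_dec a h); [|lra].
  split; apply (Rmult_le_reg_r (2 * h)); try lra; field_simplify; try lra; nra.
Qed.

Lemma is_derive_huber_relu h a : 0 < h -> is_derive (huber_relu h) a (huber_relu_deriv h a).
Proof.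
  intros Hh. apply (is_derive_of_quadratic_error _ _ _ (/ (2 * h))). intros b.
  destruct (huber_relu_taylor h a b Hh). rewrite Rabs_right by lra.
  replace (/ (2 * h) * ((b - a) * (b - a))) with ((b - a) * (b - a) / (2 * h)) by (field; lra).
  lra.
Qed.

(** * Arithmetic of one descent step *)

Lemma neg_ln_decrease L L' D : 0 < L -> 0 < L' -> 0 <= D -> L' <= L - D ->
  - ln L + D / L <= - ln L'.
Proof.
  intros HL HL' HD Hstep.
  assert (D / L < 1) by (apply Rlt_div_l; lra).
  assert (Hq : 0 < 1 - D / L) by lra.
  assert (ln L' <= ln L + ln (1 - D / L)).
  { rewrite <- ln_mult by lra. apply ln_le; [lra|].
    replace (L * (1 - D / L)) with (L - D) by (field; lra). exact Hstep. }
  pose proof (ln_le_sub1 _ Hq). lra.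
Qed.

(* [1 / (L - D) >= 1 / L + D / L^2] turns a decrease [D >= Q2 L^2 / L1] into [L1 / L' >= L1 / L + Q2]. *)
Lemma loss_ratio_step L L' L1 D A Q2 : 0 < L -> 0 < L' -> 0 < L1 -> 0 <= A -> 0 <= Q2 ->
  L' <= L - D -> L * A <= L1 -> Q2 * (L * L) <= D * L1 ->
  L' * (A + Q2) <= L1.
Proof.
  intros HL HL' HL1 HA HQ2 Hstep HLA HD.
  apply Rle_trans with ((L - D) * (A + Q2)); [apply Rmult_le_compat_r; lra|].
  set (w := L1 - L * A). set (v := L * Q2).
  assert (Hw : 0 <= w) by (unfold w; lra).
  assert (Hv : 0 <= v) by (unfold v; nra).
  assert (HDv : v * L <= D * L1) by (unfold v; nra).
  assert (Hgoal : L1 * ((L - D) * (A + Q2)) <= L1 * L1); [|nra].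
  replace (L1 * ((L - D) * (A + Q2))) with (L1 * (L1 - w + v) - D * L1 * (A + Q2))
    by (unfold w, v; ring).
  assert (D * L1 * (A + Q2) >= v * L * (A + Q2)) by nra.
  replace (v * L * (A + Q2)) with (v * (L1 - w + v)) in H by (unfold w, v; ring).
  assert (v * w <= L1 * w) by (destruct (Rle_lt_dec v L1); nra).
  nra.
Qed.

Lemma decrease_lower_bound L l L1 l1 F F1 G P Q1 Q2 :
  0 < L -> 0 < l -> 0 < L1 -> 0 < l1 -> 0 < F1 -> 0 < Q1 -> 0 <= G ->
  19/20 * (19/20) * (L * l) <= P -> P * P <= F * G -> F * l1 ^ 4 <= F1 * l ^ 4 ->
  216 * F1 * Q2 <= 125 * Q1 * L1 * l1 ^ 4 ->
  Q2 * (L * L) <= 3/4 * (Q1 * l ^ 2) * G * L1.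
Proof.
  intros HL Hl HL1 Hl1 HF1 HQ1 HG HP HPFG Hinv HQ2.
  set (c := 19/20 * (19/20)) in *.
  assert (H1 : c * c * (L * L) * (l * l) <= F * G) by (assert (0 <= c * (L * l)) by (unfold c; nra); nra).
  assert (H2 : c * c * (L * L) * (l * l) * l1 ^ 4 <= F1 * l ^ 4 * G).
  { apply Rle_trans with (F * l1 ^ 4 * G); [|apply Rmult_le_compat_r; assumption].
    replace (F * l1 ^ 4 * G) with (F * G * l1 ^ 4) by ring.
    apply Rmult_le_compat_r; [apply pow_le; lra|exact H1]. }
  assert (H3 : c * c * (L * L) * l1 ^ 4 <= F1 * l ^ 2 * G).
  { apply Rmult_le_reg_r with (l * l); [nra|].
    replace (F1 * l ^ 2 * G * (l * l)) with (F1 * l ^ 4 * G) by ring. nra. }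
  apply Rmult_le_reg_l with (216 * F1); [lra|].
  apply Rle_trans with (125 * Q1 * L1 * l1 ^ 4 * (L * L)).
  { replace (216 * F1 * (Q2 * (L * L))) with (216 * F1 * Q2 * (L * L)) by ring.
    apply Rmult_le_compat_r; [nra|exact HQ2]. }
  assert (Hc : 125 <= 162 * (c * c)) by (unfold c; lra).
  assert (0 <= c * c * (L * L) * l1 ^ 4) by (assert (0 <= l1 ^ 4) by (apply pow_le; lra); unfold c; nra).
  assert (0 < Q1 * L1) by nra.
  replace (216 * F1 * (3/4 * (Q1 * l ^ 2) * G * L1)) with (162 * (Q1 * L1) * (F1 * l ^ 2 * G)) by field.
  replace (125 * Q1 * L1 * l1 ^ 4 * (L * L)) with (125 * (Q1 * L1) * (L * L * l1 ^ 4)) by ring.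
  assert (125 * (L * L * l1 ^ 4) <= 162 * (F1 * l ^ 2 * G)) by nra.
  nra.
Qed.

(* [P L l <= P^2 / c <= F G / c] with [c = (19/20)^2], and [al G L l <= F G / 100]
   because [c^2 l^2 <= 4 pr F] and [l >= 50]. *)
Lemma alignment_step_le L l F G P al pr :
  0 < L -> 50 <= l -> 0 < al -> 0 < pr -> 0 <= G ->
  19/20 * (19/20) * (L * l) <= P -> P * P <= F * G -> G <= 4 * pr * (L * L) ->
  pr * al * L <= 1/30 ->
  (2 * P + al * G) * (L * l) <= 3 * (F * G).
Proof.
  intros HL Hl Hal Hpr HG HP HPFG HGL Hstep.
  set (c := 19/20 * (19/20)) in *.
  assert (HP0 : 0 < P) by (unfold c in HP; nra).
  assert (HFG : 0 < F * G) by nra.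
  assert (HF : 0 < F) by (destruct (Rle_lt_dec F 0); [nra|assumption]).
  assert (Ha : P * (L * l) <= F * G / c).
  { apply Rle_trans with (P * (P / c)); [apply Rmult_le_compat_l; [lra|]|].
    - apply (Rle_div_r (L * l) P c); unfold c in *; lra.
    - unfold Rdiv. rewrite <- Rmult_assoc. apply Rmult_le_compat_r; [unfold c; lra|exact HPFG]. }
  assert (Hl2 : c * c * (l * l) <= 4 * pr * F).
  { apply Rmult_le_reg_r with (L * L); [nra|].
    assert (c * c * (L * l) * (L * l) <= P * P) by (assert (0 <= c * (L * l)) by (unfold c; nra); nra).
    assert (F * G <= F * (4 * pr * (L * L))) by (apply Rmult_le_compat_l; lra).
    nra. }
  assert (Hb : al * G * (L * l) <= F * G / 100).
  { assert (Hl' : l <= 4 * pr * F / (c * c * 50)).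
    { apply (Rle_div_r l (4 * pr * F) (c * c * 50)); [unfold c; lra|]. unfold c in *; nra. }
    apply Rle_trans with (G * l / (30 * pr)).
    - apply (Rle_div_r (al * G * (L * l)) (G * l) (30 * pr)); [lra|].
      replace (al * G * (L * l) * (30 * pr)) with (G * l * (30 * (pr * al * L))) by ring.
      rewrite <- (Rmult_1_r (G * l)) at 2. apply Rmult_le_compat_l; [nra|lra].
    - apply (Rle_div_l (G * l) (F * G / 100) (30 * pr)); [lra|]. unfold c in Hl'. nra. }
  assert (F * G / c * 2 <= (3 - 1/100) * (F * G))
    by (replace (F * G / c * 2) with (2 / c * (F * G)) by (field; unfold c; lra);
        apply Rmult_le_compat_r; unfold c; lra).
  nra.
Qed.

Lemma frob_growth_le L l F F' G P al pr :
  0 < L -> 50 <= l -> 0 < al -> 0 < pr -> 0 <= G ->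
  19/20 * (19/20) * (L * l) <= P -> P * P <= F * G -> G <= 4 * pr * (L * L) ->
  pr * al * L <= 1/30 -> F' = F + 2 * al * P + al * al * G ->
  F' * l <= F * (l + 4 * (3/4 * al * G / L)).
Proof.
  intros HL Hl Hal Hpr HG HP HPFG HGL Hstep ->.
  pose proof (alignment_step_le L l F G P al pr HL Hl Hal Hpr HG HP HPFG HGL Hstep) as H.
  replace ((F + 2 * al * P + al * al * G) * l)
    with (F * l + al * ((2 * P + al * G) * (L * l)) / L) by (field; lra).
  replace (F * (l + 4 * (3/4 * al * G / L))) with (F * l + al * (3 * (F * G)) / L) by (field; lra).
  apply Rplus_le_compat_l. unfold Rdiv.
  apply Rmult_le_compat_r; [apply Rlt_le, Rinv_0_lt_compat; lra|].
  apply Rmult_le_compat_l; lra.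
Qed.

Lemma frob_ratio_step l l' l1 e F F' F1 :
  0 < l -> 0 <= e -> l + e <= l' -> 0 <= l1 -> 0 <= F1 ->
  F' * l <= F * (l + 4 * e) -> F * l1 ^ 4 <= F1 * l ^ 4 ->
  F' * l1 ^ 4 <= F1 * l' ^ 4.
Proof.
  intros Hl He Hl' Hl1 HF1 HF' Hinv.
  assert (H1 : F' * l1 ^ 4 * l <= F1 * l ^ 4 * (l + 4 * e)).
  { apply Rle_trans with (F * l1 ^ 4 * (l + 4 * e)).
    - replace (F' * l1 ^ 4 * l) with (l1 ^ 4 * (F' * l)) by ring.
      replace (F * l1 ^ 4 * (l + 4 * e)) with (l1 ^ 4 * (F * (l + 4 * e))) by ring.
      apply Rmult_le_compat_l; [apply pow_le; lra|exact HF'].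
    - apply Rmult_le_compat_r; [lra|exact Hinv]. }
  assert (H2 : F' * l1 ^ 4 <= F1 * (l * l * (l * l) + 4 * (l * l * l) * e)).
  { apply Rmult_le_reg_r with l; [lra|]. eapply Rle_trans; [exact H1|right; ring]. }
  eapply Rle_trans; [exact H2|]. apply Rmult_le_compat_l; [exact HF1|].
  eapply Rle_trans; [apply pow4_add_ge; lra|].
  replace ((l + e) * (l + e) * ((l + e) * (l + e))) with ((l + e) ^ 4) by ring.
  apply pow_incr. lra.
Qed.

Lemma small_loss_regime n L1 : (2 <= n)%nat -> 0 < L1 -> L1 <= 1 / Rpower (INR n) 101 ->
  INR n * L1 <= 1/40 /\ ln (2 * INR n) + 1 <= 1/20 * - ln L1 /\ 50 <= - ln L1.
Proof.
  intros Hn HL1 Hsmall.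
  assert (HnR : 2 <= INR n) by (apply (le_INR 2) in Hn; exact Hn).
  assert (Hln2n : ln 2 <= ln (INR n)) by (apply ln_le; lra).
  assert (Hlnn : / 2 < ln (INR n)) by (pose proof ln_lt_2; lra).
  assert (Hl1 : 101 * ln (INR n) <= - ln L1).
  { apply ln_le in Hsmall; [|exact HL1].
    rewrite ln_1_div, ln_Rpower in Hsmall by apply exp_pos. lra. }
  assert (Hln2 : ln (2 * INR n) = ln 2 + ln (INR n)) by (apply ln_mult; lra).
  split; [|split; lra].
  destruct (Rle_lt_dec (INR n * L1) (1/40)) as [|Hgt]; [assumption|exfalso].
  apply ln_increasing in Hgt; [|lra].
  rewrite ln_mult, ln_1_div in Hgt by lra.
  pose proof (ln_le_sub1 40 ltac:(lra)). lra.
Qed.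

Lemma step_size_small pr Q1 L : 0 < pr -> 0 < Q1 -> Q1 <= exp 2 / (120 * pr) ->
  0 < L -> 0 <= - ln L ->
  pr * (Q1 * (- ln L) ^ 2) * L <= 1/30.
Proof.
  intros Hpr HQ1 HQ1b HL Hl.
  pose proof (sq_mul_exp_neg_le (- ln L) Hl) as H.
  rewrite Ropp_involutive, exp_ln in H by exact HL.
  assert (Hq : pr * Q1 <= exp 2 / 120).
  { apply Rmult_le_compat_l with (r := pr) in HQ1b; [|lra].
    replace (pr * (exp 2 / (120 * pr))) with (exp 2 / 120) in HQ1b by (field; lra). exact HQ1b. }
  pose proof (exp_pos 2).
  replace (pr * (Q1 * (- ln L) ^ 2) * L) with (pr * Q1 * (- ln L * - ln L * L)) by ring.
  apply Rle_trans with (exp 2 / 120 * (4 / exp 2)).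
  - apply Rmult_le_compat; [nra|apply Rmult_le_pos; [nra|lra]|exact Hq|exact H].
  - right. field. lra.
Qed.

(** * The network as a function of its weight matrix *)

(* The parameters as the 2p x (d+1) matrix [V^(t)] with rows (v_i, b_i), acting on
   the augmented inputs (x, 1). *)
Definition weight (d : nat) (th : params) (i j : nat) : R :=
  if Nat.ltb j d then pv th i j else pb th i.

Definition augment (d : nat) (x : nat -> R) (j : nat) : R := if Nat.ltb j d then x j else 1.

Definition set_weight (d : nat) (th : params) (i j : nat) (z : R) : params :=
  if Nat.ltb j d then set_v th i j z else set_b th i z.

Definition preact (d : nat) (th : params) (x : nat -> R) (i : nat) : R :=
  fsum d (fun j => pv th i j * x j) + pb th i.

Lemma network_preact p d th x :
  network p d th x = fsum (2 * p) (fun i => out_weight p i * huber_relu (/ INR p) (preact d th x i)).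
Proof. reflexivity. Qed.

Lemma preact_weight d th x i :
  preact d th x i = fsum (S d) (fun j => weight d th i j * augment d x j).
Proof.
  unfold preact, weight, augment. cbn [fsum]. rewrite Nat.ltb_irrefl, Rmult_1_r.
  rewrite (fsum_ext d (fun j => (if Nat.ltb j d then pv th i j else pb th i) *
                                (if Nat.ltb j d then x j else 1)) (fun j => pv th i j * x j));
    [reflexivity|].
  intros j Hj. destruct (Nat.ltb_spec j d); [reflexivity|lia].
Qed.

Lemma frob_sq_weight p d th :
  frob_sq p d th = dsum (2 * p) (S d) (fun i j => weight d th i j * weight d th i j).
Proof.
  apply fsum_ext. intros i _. unfold weight. cbn [fsum]. rewrite Nat.ltb_irrefl.
  symmetry. rewrite (fsum_ext d _ (fun j => pv th i j ^ 2)); [ring|].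
  intros j Hj. destruct (Nat.ltb_spec j d); [ring|lia].
Qed.

Lemma augment_sq_sum d x : fsum d (fun j => x j ^ 2) = 1 ->
  fsum (S d) (fun j => augment d x j * augment d x j) = 2.
Proof.
  intros Hx. unfold augment. cbn [fsum]. rewrite Nat.ltb_irrefl.
  rewrite (fsum_ext d _ (fun j => x j ^ 2)), Hx; [ring|].
  intros j Hj. destruct (Nat.ltb_spec j d); [ring|lia].
Qed.

Lemma sign_mul_out_weight p (y : R) i : y = 1 \/ y = -1 ->
  y * out_weight p i = 1 \/ y * out_weight p i = -1.
Proof. unfold out_weight. intros [-> | ->]; destruct (Nat.ltb i p); lra. Qed.

Lemma weight_set_weight d th i j z i' j' : (j <= d)%nat -> (j' <= d)%nat ->
  weight d (set_weight d th i j z) i' j' =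
  if andb (Nat.eqb i' i) (Nat.eqb j' j) then z else weight d th i' j'.
Proof.
  intros Hj Hj'. unfold weight, set_weight, set_v, set_b.
  destruct (Nat.ltb_spec j d), (Nat.ltb_spec j' d); simpl;
    destruct (Nat.eqb_spec i' i), (Nat.eqb_spec j' j); simpl; try reflexivity; lia.
Qed.

Lemma preact_set_weight_same d th i j x i' : (j <= d)%nat ->
  preact d (set_weight d th i j (weight d th i j)) x i' = preact d th x i'.
Proof.
  intros Hj. rewrite !preact_weight. apply fsum_ext. intros j' Hj'.
  rewrite weight_set_weight by lia.
  destruct (Nat.eqb_spec i' i), (Nat.eqb_spec j' j); subst; reflexivity.
Qed.

Lemma is_derive_preact_set_weight d th i j x i' z0 : (j <= d)%nat ->
  is_derive (fun z => preact d (set_weight d th i j z) x i') z0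
    (if Nat.eqb i' i then augment d x j else 0).
Proof.
  intros Hj.
  apply is_derive_ext with
    (f := fun z => fsum (S d) (fun j' =>
            (if andb (Nat.eqb i' i) (Nat.eqb j' j) then z else weight d th i' j') * augment d x j')).
  { intros z. rewrite preact_weight. apply fsum_ext. intros j' Hj'.
    rewrite weight_set_weight by lia. reflexivity. }
  destruct (Nat.eqb i' i); cbn [andb].
  - rewrite <- (fsum_indicator (S d) j (augment d x j)) by lia.
    apply is_derive_fsum. intros j' _.
    destruct (Nat.eqb_spec j' j); subst; auto_derive; auto; ring.
  - auto_derive; reflexivity.
Qed.

Section Gradient.

Variables (n p d : nat) (X : nat -> nat -> R) (Y : nat -> R).

Definition margin (th : params) (s : nat) : R := Y s * network p d th (X s).

Definition margin_grad (th : params) (s i j : nat) : R :=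
  Y s * out_weight p i * huber_relu_deriv (/ INR p) (preact d th (X s) i) * augment d (X s) j.

Definition loss_grad (th : params) (i j : nat) : R :=
  - (/ INR n * fsum n (fun s => logistic_slope (margin th s) * margin_grad th s i j)).

Lemma loss_margin th : loss n p d X Y th = / INR n * fsum n (fun s => logistic (margin th s)).
Proof. reflexivity. Qed.

Hypothesis p_pos : (1 <= p)%nat.

Lemma inv_INR_p_pos : 0 < / INR p.
Proof. apply Rinv_0_lt_compat, lt_0_INR. lia. Qed.

Lemma is_derive_margin_set_weight th s i j : (i < 2 * p)%nat -> (j <= d)%nat ->
  is_derive (fun z => margin (set_weight d th i j z) s) (weight d th i j) (margin_grad th s i j).
Proof.
  intros Hi Hj. unfold margin, margin_grad. rewrite !Rmult_assoc. apply is_derive_scal.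
  eapply is_derive_ext; [intros z; symmetry; apply network_preact|].
  replace (out_weight p i * (huber_relu_deriv (/ INR p) (preact d th (X s) i) * augment d (X s) j))
    with (fsum (2 * p) (fun i' => out_weight p i' *
      (huber_relu_deriv (/ INR p) (preact d th (X s) i') * (if Nat.eqb i' i then augment d (X s) j else 0)))).
  - apply is_derive_fsum. intros i' _. apply is_derive_scal.
    rewrite <- (preact_set_weight_same d th i j (X s) i') by exact Hj.
    apply (is_derive_comp_R (huber_relu (/ INR p)) (fun z => preact d (set_weight d th i j z) (X s) i')).
    + apply is_derive_huber_relu, inv_INR_p_pos.
    + now apply is_derive_preact_set_weight.
  - rewrite <- (fsum_indicator (2 * p) i
      (out_weight p i * (huber_relu_deriv (/ INR p) (preact d th (X s) i) * augment d (X s) j))) by exact Hi.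
    apply fsum_ext. intros i' _. destruct (Nat.eqb_spec i' i); subst; ring.
Qed.

Lemma is_derive_loss_set_weight th i j : (i < 2 * p)%nat -> (j <= d)%nat ->
  is_derive (fun z => loss n p d X Y (set_weight d th i j z)) (weight d th i j) (loss_grad th i j).
Proof.
  intros Hi Hj.
  replace (loss_grad th i j)
    with (/ INR n * fsum n (fun s => - logistic_slope (margin th s) * margin_grad th s i j)).
  2:{ unfold loss_grad.
      rewrite (fsum_ext n (fun s => - logistic_slope (margin th s) * margin_grad th s i j)
                 (fun s => -1 * (logistic_slope (margin th s) * margin_grad th s i j))) by (intros; ring).
      rewrite fsum_scal_l. ring. }
  apply is_derive_scal, is_derive_fsum. intros s _.
  apply (is_derive_comp_R logistic (fun z => margin (set_weight d th i j z) s)).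
  - change (margin (set_weight d th i j (weight d th i j)) s) with
      (Y s * network p d (set_weight d th i j (weight d th i j)) (X s)).
    rewrite network_preact.
    rewrite (fsum_ext (2 * p) _ (fun i' => out_weight p i' * huber_relu (/ INR p) (preact d th (X s) i')))
      by (intros; rewrite preact_set_weight_same by exact Hj; reflexivity).
    apply is_derive_logistic.
  - now apply is_derive_margin_set_weight.
Qed.

Lemma grad_v_loss_grad th i j : (i < 2 * p)%nat -> (j < d)%nat ->
  grad_v (loss n p d X Y) th i j = loss_grad th i j.
Proof.
  intros Hi Hj. apply is_derive_unique.
  pose proof (is_derive_loss_set_weight th i j Hi ltac:(lia)) as H.
  unfold set_weight, weight in H. destruct (Nat.ltb_spec j d); [exact H|lia].
Qed.

Lemma grad_b_loss_grad th i : (i < 2 * p)%nat ->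
  grad_b (loss n p d X Y) th i = loss_grad th i d.
Proof.
  intros Hi. apply is_derive_unique.
  pose proof (is_derive_loss_set_weight th i d Hi (le_n d)) as H.
  unfold set_weight, weight in H. rewrite Nat.ltb_irrefl in H. exact H.
Qed.

End Gradient.

(** * Convergence *)

Section Convergence.

Variables (n p d : nat) (X : nat -> nat -> R) (Y : nat -> R).

Hypothesis n_pos : (1 <= n)%nat.
Hypothesis p_pos : (1 <= p)%nat.
Hypothesis X_unit : forall s, (s < n)%nat -> fsum d (fun j => X s j ^ 2) = 1.
Hypothesis Y_sign : forall s, (s < n)%nat -> Y s = 1 \/ Y s = -1.

Local Notation L := (loss n p d X Y).
Local Notation slope th s := (logistic_slope (margin p d X Y th s)).
Local Notation q := (margin_grad p d X Y).
Local Notation g := (loss_grad n p d X Y).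

Definition mean_slope (th : params) : R :=
  / INR n * fsum n (fun s => logistic_slope (margin p d X Y th s)).

Definition grad_sq (th : params) : R :=
  dsum (2 * p) (S d) (fun i j => loss_grad n p d X Y th i j * loss_grad n p d X Y th i j).

Definition alignment (th : params) : R :=
  - dsum (2 * p) (S d) (fun i j => loss_grad n p d X Y th i j * weight d th i j).

Lemma INR_n_pos : 0 < INR n.
Proof. apply lt_0_INR. lia. Qed.

Lemma INR_p_pos : 0 < INR p.
Proof. apply lt_0_INR. lia. Qed.

Lemma loss_pos th : 0 < L th.
Proof.
  rewrite loss_margin. apply Rmult_lt_0_compat; [apply Rinv_0_lt_compat, INR_n_pos|].
  destruct n as [|m]; [lia|]. cbn [fsum].
  assert (0 <= fsum m (fun s => logistic (margin p d X Y th s)))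
    by (apply fsum_nonneg; intros; apply Rlt_le, logistic_pos).
  pose proof (logistic_pos (margin p d X Y th m)). lra.
Qed.

Lemma mean_slope_nonneg th : 0 <= mean_slope th.
Proof.
  apply Rmult_le_pos; [apply Rlt_le, Rinv_0_lt_compat, INR_n_pos|].
  apply fsum_nonneg. intros. apply Rlt_le, logistic_slope_pos.
Qed.

Lemma mean_slope_le_loss th : mean_slope th <= L th.
Proof.
  rewrite loss_margin. apply Rmult_le_compat_l; [apply Rlt_le, Rinv_0_lt_compat, INR_n_pos|].
  apply fsum_le. intros. apply logistic_slope_le_logistic.
Qed.

Lemma grad_sq_nonneg th : 0 <= grad_sq th.
Proof. apply dsum_nonneg. intros. apply Rle_0_sqr. Qed.

Lemma sum_slope_margin_grad_dot th V :
  fsum n (fun s => slope th s * dsum (2 * p) (S d) (fun i j => q th s i j * V i j))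
  = - INR n * dsum (2 * p) (S d) (fun i j => g th i j * V i j).
Proof.
  rewrite (fsum_ext n _ (fun s => dsum (2 * p) (S d) (fun i j => slope th s * (q th s i j * V i j))))
    by (intros; rewrite dsum_scal_l; reflexivity).
  rewrite fsum_dsum_swap, <- dsum_scal_l. apply dsum_ext. intros i j _ _.
  rewrite (fsum_ext n _ (fun s => slope th s * q th s i j * V i j)) by (intros; ring).
  rewrite fsum_scal_r. unfold loss_grad. pose proof INR_n_pos. field. lra.
Qed.

Lemma margin_grad_sq_le th s : (s < n)%nat ->
  dsum (2 * p) (S d) (fun i j => q th s i j * q th s i j) <= 4 * INR p.
Proof.
  intros Hs. apply Rle_trans with (dsum (2 * p) (S d) (fun i j => augment d (X s) j * augment d (X s) j)).
  - apply dsum_le. intros i j _ _. unfold margin_grad.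
    pose proof (huber_relu_deriv_bounds (/ INR p) (preact d th (X s) i) (inv_INR_p_pos p p_pos)).
    set (h := huber_relu_deriv _ _) in *. set (a := augment d (X s) j).
    assert (Hh : h * h <= 1) by nra.
    assert (0 <= a * a) by apply Rle_0_sqr.
    destruct (sign_mul_out_weight p (Y s) i (Y_sign s Hs)) as [Hyu|Hyu]; rewrite Hyu; nra.
  - unfold dsum. rewrite (fsum_ext (2 * p) _ (fun _ => 2)) by (intros; apply augment_sq_sum, X_unit, Hs).
    rewrite fsum_const, mult_INR. simpl. lra.
Qed.

Lemma margin_grad_dot_sq_le th s : (s < n)%nat ->
  dsum (2 * p) (S d) (fun i j => q th s i j * g th i j) *
  dsum (2 * p) (S d) (fun i j => q th s i j * g th i j) <= 4 * INR p * grad_sq th.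
Proof.
  intros Hs. eapply Rle_trans; [apply dsum_cauchy_schwarz|].
  apply Rmult_le_compat_r; [apply grad_sq_nonneg|]. now apply margin_grad_sq_le.
Qed.

(* Cauchy-Schwarz with the weights [slope_s] in [sum_s slope_s <q_s, g> = - n G],
   together with [|q_s|^2 <= 4 p]. *)
Lemma grad_sq_le th : grad_sq th <= 4 * INR p * (mean_slope th * mean_slope th).
Proof.
  set (c s := dsum (2 * p) (S d) (fun i j => q th s i j * g th i j)).
  set (G := grad_sq th).
  assert (HG : 0 <= G) by apply grad_sq_nonneg.
  assert (Hsum : fsum n (fun s => slope th s * c s * 1) = - INR n * G).
  { unfold G, grad_sq. rewrite <- (sum_slope_margin_grad_dot th (g th)). apply fsum_ext. intros. unfold c. ring. }
  pose proof (fsum_cauchy_schwarz_weighted n (fun s => slope th s) c (fun _ => 1)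
                (fun k _ => Rlt_le _ _ (logistic_slope_pos _))) as Hcs.
  cbv beta in Hcs. rewrite Hsum in Hcs.
  assert (Hc : fsum n (fun s => slope th s * c s * c s) <= fsum n (fun s => slope th s * 1 * 1) * (4 * INR p * G)).
  { rewrite <- fsum_scal_r. apply fsum_le. intros s Hs.
    pose proof (margin_grad_dot_sq_le th s Hs) as Hcs'. change (c s * c s <= 4 * INR p * G) in Hcs'.
    rewrite !Rmult_1_r, Rmult_assoc.
    apply Rmult_le_compat_l; [apply Rlt_le, logistic_slope_pos|exact Hcs']. }
  assert (HS : fsum n (fun s => slope th s * 1 * 1) = INR n * mean_slope th).
  { unfold mean_slope. pose proof INR_n_pos.
    rewrite (fsum_ext n _ (fun s => slope th s)) by (intros; ring). field. lra. }
  rewrite HS in Hc, Hcs.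
  pose proof INR_n_pos. pose proof INR_p_pos. pose proof (mean_slope_nonneg th).
  set (Sm := mean_slope th) in *.
  assert (Hn2 : INR n * INR n * G * G <= INR n * INR n * G * (4 * INR p * (Sm * Sm))).
  { apply Rle_trans with (INR n * Sm * (4 * INR p * G) * (INR n * Sm)); [|right; ring].
    eapply Rle_trans; [|apply Rmult_le_compat_r; [nra|exact Hc]]. lra. }
  destruct (Rle_lt_or_eq_dec 0 G HG) as [HGp|HG0].
  - apply Rmult_le_reg_l with (INR n * INR n * G); [|lra].
    apply Rmult_lt_0_compat; [apply Rmult_lt_0_compat|]; assumption.
  - rewrite <- HG0. apply Rmult_le_pos; [lra|apply Rle_0_sqr].
Qed.

Lemma grad_sq_le_loss th : grad_sq th <= 4 * INR p * (L th * L th).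
Proof.
  pose proof (grad_sq_le th). pose proof (mean_slope_nonneg th). pose proof (mean_slope_le_loss th).
  pose proof INR_p_pos. eapply Rle_trans; [eassumption|]. apply Rmult_le_compat_l; [lra|]. nra.
Qed.

(* By [0 <= phi' a * a - phi a <= h/2], the [2p] units lose at most [2p * h/2 = 1]. *)
Lemma margin_grad_dot_weight_ge th s : (s < n)%nat ->
  margin p d X Y th s - 1 <= dsum (2 * p) (S d) (fun i j => q th s i j * weight d th i j).
Proof.
  intros Hs. pose proof INR_p_pos.
  replace (dsum (2 * p) (S d) (fun i j => q th s i j * weight d th i j)) with
    (fsum (2 * p) (fun i => Y s * out_weight p i *
       (huber_relu_deriv (/ INR p) (preact d th (X s) i) * preact d th (X s) i))).
  2:{ apply fsum_ext. intros i _. unfold margin_grad.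
      rewrite (preact_weight d th (X s) i), <- !fsum_scal_l. apply fsum_ext. intros. ring. }
  unfold margin. rewrite network_preact, <- fsum_scal_l.
  replace 1 with (fsum (2 * p) (fun _ => / INR p / 2))
    by (rewrite fsum_const, mult_INR; simpl; field; lra).
  rewrite <- fsum_minus. apply fsum_le. intros i _.
  pose proof (huber_relu_deriv_mul_sub (/ INR p) (preact d th (X s) i) (inv_INR_p_pos p p_pos)).
  destruct (sign_mul_out_weight p (Y s) i (Y_sign s Hs)) as [Hyu|Hyu];
    rewrite <- Rmult_assoc, Hyu; lra.
Qed.

Lemma alignment_sq_le th : alignment th * alignment th <= frob_sq p d th * grad_sq th.
Proof.
  unfold alignment, grad_sq. rewrite frob_sq_weight.
  pose proof (dsum_cauchy_schwarz (2 * p) (S d) (g th) (weight d th)). lra.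
Qed.

Lemma frob_sq_step th th' al :
  (forall i j, (i < 2 * p)%nat -> (j < S d)%nat -> weight d th' i j = weight d th i j - al * g th i j) ->
  frob_sq p d th' = frob_sq p d th + 2 * al * alignment th + al * al * grad_sq th.
Proof.
  intros H. rewrite !frob_sq_weight. unfold alignment, grad_sq.
  rewrite (dsum_ext _ _ (fun i j => weight d th' i j * weight d th' i j)
    (fun i j => (weight d th i j * weight d th i j + (- 2 * al) * (g th i j * weight d th i j))
                + (al * al) * (g th i j * g th i j)))
    by (intros i j Hi Hj; rewrite H by assumption; ring).
  rewrite !dsum_plus, !dsum_scal_l. ring.
Qed.

(* Each sample has loss at most [n L], hence slope at least [19/20] of its loss and
   margin at least [ln (1/L) - ln (2n)]. *)
Lemma large_margin th :
  INR n * L th <= 1/40 -> ln (2 * INR n) + 1 <= 1/20 * - ln (L th) ->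
  19/20 * L th <= mean_slope th /\
  19/20 * (19/20) * (L th * - ln (L th)) <= alignment th.
Proof.
  intros Hsmall Hlog. pose proof INR_n_pos. pose proof (loss_pos th) as HL.
  assert (Hl : 0 <= - ln (L th)).
  { assert (0 <= ln (2 * INR n)); [|lra].
    rewrite <- ln_1. apply ln_le; [lra|]. apply (le_INR 1) in n_pos. simpl in n_pos. lra. }
  assert (Hsum : fsum n (fun s => logistic (margin p d X Y th s)) = INR n * L th)
    by (rewrite loss_margin; field; lra).
  assert (Hper : forall s, (s < n)%nat ->
    19/20 * logistic (margin p d X Y th s) <= slope th s /\
    19/20 * - ln (L th) <= margin p d X Y th s - 1).
  { intros s Hs.
    assert (Hle : logistic (margin p d X Y th s) <= INR n * L th).
    { rewrite <- Hsum. apply (fsum_term_le n (fun s => logistic (margin p d X Y th s)) s);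
        [intros; apply Rlt_le, logistic_pos|exact Hs]. }
    destruct (logistic_small _ _ Hle Hsmall) as [H1 H2]. split; [exact H1|].
    rewrite !ln_mult in H2 by nra.
    rewrite ln_mult in Hlog by lra. lra. }
  assert (HS : INR n * (19/20 * L th) <= INR n * mean_slope th).
  { unfold mean_slope.
    replace (INR n * (19/20 * L th)) with (fsum n (fun s => 19/20 * logistic (margin p d X Y th s)))
      by (rewrite fsum_scal_l, Hsum; ring).
    replace (INR n * (/ INR n * fsum n (fun s => slope th s))) with (fsum n (fun s => slope th s))
      by (field; lra).
    apply fsum_le. intros. apply Hper. assumption. }
  assert (HP : fsum n (fun s => slope th s * (19/20 * - ln (L th))) <= INR n * alignment th).
  { replace (INR n * alignment th) with
      (fsum n (fun s => slope th s * dsum (2 * p) (S d) (fun i j => q th s i j * weight d th i j)))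
      by (rewrite sum_slope_margin_grad_dot; unfold alignment; ring).
    apply fsum_le. intros s Hs. apply Rmult_le_compat_l; [apply Rlt_le, logistic_slope_pos|].
    eapply Rle_trans; [apply Hper, Hs|apply margin_grad_dot_weight_ge, Hs]. }
  rewrite fsum_scal_r in HP.
  replace (fsum n (fun s => slope th s)) with (INR n * mean_slope th) in HP
    by (unfold mean_slope; field; lra).
  split; [nra|].
  apply Rmult_le_reg_l with (INR n); [lra|]. nra.
Qed.

(* [p al^2 G <= 4 (p al S)^2] bounds both the margin changes of a step and their cost. *)
Lemma step_curvature_le th al : 0 < al -> INR p * al * L th <= 1/30 ->
  0 <= INR p * (al * al) * grad_sq th <= 1/225 /\
  INR p * (al * al) * grad_sq th * mean_slope th <= al * grad_sq th / 30.
Proof.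
  intros Hal Hsmall. pose proof INR_p_pos.
  pose proof (grad_sq_nonneg th) as HG. pose proof (mean_slope_nonneg th) as HS.
  pose proof (grad_sq_le th) as HGS.
  assert (HpaS : INR p * al * mean_slope th <= 1/30).
  { eapply Rle_trans; [|exact Hsmall]. apply Rmult_le_compat_l; [nra|apply mean_slope_le_loss]. }
  assert (HpaS0 : 0 <= INR p * al * mean_slope th)
    by (apply Rmult_le_pos; [apply Rmult_le_pos|]; lra).
  assert (Hal2 : 0 <= INR p * (al * al)) by (apply Rmult_le_pos; [lra|apply Rle_0_sqr]).
  split; [split|].
  - apply Rmult_le_pos; assumption.
  - apply Rle_trans with (4 * ((INR p * al * mean_slope th) * (INR p * al * mean_slope th))); [|nra].
    replace (4 * (INR p * al * mean_slope th * (INR p * al * mean_slope th)))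
      with (INR p * (al * al) * (4 * INR p * (mean_slope th * mean_slope th))) by ring.
    apply Rmult_le_compat_l; assumption.
  - replace (INR p * (al * al) * grad_sq th * mean_slope th)
      with (INR p * al * mean_slope th * (al * grad_sq th)) by ring.
    assert (0 <= al * grad_sq th) by nra. nra.
Qed.

Section Step.

Variables (th th' : params) (al : R).

Hypothesis gd_step : forall i j, (i < 2 * p)%nat -> (j < S d)%nat ->
  weight d th' i j = weight d th i j - al * g th i j.

Lemma preact_step s i : (i < 2 * p)%nat ->
  preact d th' (X s) i =
  preact d th (X s) i + - al * fsum (S d) (fun j => g th i j * augment d (X s) j).
Proof.
  intros Hi. rewrite !preact_weight, <- fsum_scal_l, <- fsum_plus.
  apply fsum_ext. intros j Hj. rewrite gd_step by assumption. ring.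
Qed.

Lemma preact_step_sq_le s i : (s < n)%nat ->
  (- al * fsum (S d) (fun j => g th i j * augment d (X s) j)) *
  (- al * fsum (S d) (fun j => g th i j * augment d (X s) j))
  <= 2 * (al * al) * fsum (S d) (fun j => g th i j * g th i j).
Proof.
  intros Hs. pose proof (fsum_cauchy_schwarz (S d) (g th i) (augment d (X s))) as Hcs.
  rewrite augment_sq_sum in Hcs by (apply X_unit, Hs).
  pose proof (Rle_0_sqr al). unfold Rsqr in *. nra.
Qed.

(* Each Huberized unit is [p]-smooth, so the remainder of the first-order change
   [- al <q_s, g>] is at most [sum_i p dl_i^2 / 2 <= p al^2 G]. *)
Lemma margin_step_remainder s : (s < n)%nat ->
  Rabs (margin p d X Y th' s - margin p d X Y th s
        - - al * dsum (2 * p) (S d) (fun i j => q th s i j * g th i j))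
  <= INR p * (al * al) * grad_sq th.
Proof.
  intros Hs. pose proof INR_p_pos. pose proof (inv_INR_p_pos p p_pos) as Hh.
  set (a i := preact d th (X s) i).
  set (dl i := - al * fsum (S d) (fun j => g th i j * augment d (X s) j)).
  set (rem i := huber_relu (/ INR p) (a i + dl i) - huber_relu (/ INR p) (a i)
                - huber_relu_deriv (/ INR p) (a i) * dl i).
  assert (Hrem : forall i, 0 <= rem i <= INR p * (al * al) * fsum (S d) (fun j => g th i j * g th i j)).
  { intros i. destruct (huber_relu_taylor (/ INR p) (a i) (a i + dl i) Hh) as [H1 H2].
    replace (a i + dl i - a i) with (dl i) in H1, H2 by ring.
    split; [exact H1|]. eapply Rle_trans; [exact H2|].
    replace (dl i * dl i / (2 * / INR p)) with (INR p / 2 * (dl i * dl i)) by (field; lra).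
    pose proof (preact_step_sq_le s i Hs). fold (dl i) in H0. nra. }
  replace (margin p d X Y th' s - margin p d X Y th s
           - - al * dsum (2 * p) (S d) (fun i j => q th s i j * g th i j))
    with (fsum (2 * p) (fun i => Y s * out_weight p i * rem i)).
  2:{ unfold margin, dsum. rewrite !network_preact, <- !fsum_scal_l, <- !fsum_minus.
      apply fsum_ext. intros i Hi. rewrite preact_step by exact Hi.
      replace (fsum (S d) (fun j => q th s i j * g th i j)) with
        (Y s * out_weight p i * huber_relu_deriv (/ INR p) (a i) *
         fsum (S d) (fun j => g th i j * augment d (X s) j))
        by (rewrite <- fsum_scal_l; apply fsum_ext; intros; unfold margin_grad, a; ring).
      unfold rem, dl, a. ring. }
  apply Rabs_le. unfold grad_sq, dsum. rewrite <- fsum_scal_l.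
  assert (Hsum : fsum (2 * p) rem <= fsum (2 * p) (fun i => INR p * (al * al) *
                   fsum (S d) (fun j => g th i j * g th i j)))
    by (apply fsum_le; intros; apply Hrem).
  assert (Hpm : forall i, - rem i <= Y s * out_weight p i * rem i <= rem i).
  { intros i. destruct (Hrem i).
    destruct (sign_mul_out_weight p (Y s) i (Y_sign s Hs)) as [-> | ->]; lra. }
  split.
  - apply Rle_trans with (fsum (2 * p) (fun i => - rem i)).
    + rewrite fsum_opp. lra.
    + apply fsum_le. intros. apply Hpm.
  - eapply Rle_trans; [|exact Hsum]. apply fsum_le. intros. apply Hpm.
Qed.

Lemma loss_descent : 0 < al -> INR p * al * L th <= 1/30 ->
  L th' <= L th - 3/4 * al * grad_sq th.
Proof.
  intros Hal Hsmall. pose proof INR_n_pos.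
  destruct (step_curvature_le th al Hal Hsmall) as [HK HKS].
  set (K := INR p * (al * al) * grad_sq th) in *.
  set (Lin s := - al * dsum (2 * p) (S d) (fun i j => q th s i j * g th i j)).
  assert (Hper : forall s, (s < n)%nat ->
    logistic (margin p d X Y th' s)
    <= logistic (margin p d X Y th s) - slope th s * Lin s + 15/2 * K * slope th s).
  { intros s Hs.
    replace (margin p d X Y th' s)
      with (margin p d X Y th s + (margin p d X Y th' s - margin p d X Y th s)) by ring.
    apply logistic_perturb_le; [exact HK| |apply margin_step_remainder, Hs].
    unfold Lin, K. pose proof (margin_grad_dot_sq_le th s Hs).
    pose proof (Rle_0_sqr al). unfold Rsqr in *. nra. }
  assert (HLin : fsum n (fun s => slope th s * Lin s) = INR n * (al * grad_sq th)).
  { unfold Lin.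
    rewrite (fsum_ext n _ (fun s => - al * (slope th s *
               dsum (2 * p) (S d) (fun i j => q th s i j * g th i j)))) by (intros; ring).
    rewrite fsum_scal_l, sum_slope_margin_grad_dot. unfold grad_sq. ring. }
  rewrite !loss_margin in *.
  apply Rle_trans with (/ INR n * fsum n (fun s => logistic (margin p d X Y th s)
                          - slope th s * Lin s + 15/2 * K * slope th s)).
  { apply Rmult_le_compat_l; [apply Rlt_le, Rinv_0_lt_compat; lra|]. apply fsum_le. exact Hper. }
  rewrite fsum_plus, fsum_minus, HLin, fsum_scal_l.
  replace (/ INR n * (fsum n (fun s => logistic (margin p d X Y th s)) - INR n * (al * grad_sq th)
             + 15/2 * K * fsum n (fun s => slope th s)))
    with (/ INR n * fsum n (fun s => logistic (margin p d X Y th s)) - al * grad_sq th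
          + 15/2 * K * mean_slope th) by (unfold mean_slope; field; lra).
  lra.
Qed.

End Step.

Lemma frob_sq_pos th :
  INR n * L th <= 1/40 -> ln (2 * INR n) + 1 <= 1/20 * - ln (L th) -> 0 < frob_sq p d th.
Proof.
  intros Hsmall Hlog. destruct (large_margin th Hsmall Hlog) as [_ HP].
  pose proof (loss_pos th). pose proof (alignment_sq_le th). pose proof (grad_sq_nonneg th).
  assert (HF : 0 <= frob_sq p d th)
    by (rewrite frob_sq_weight; apply dsum_nonneg; intros; apply Rle_0_sqr).
  assert (0 < - ln (L th)).
  { assert (0 <= ln (2 * INR n)); [|lra].
    rewrite <- ln_1. apply ln_le; [lra|]. apply (le_INR 1) in n_pos. simpl in n_pos. lra. }
  assert (0 < alignment th) by nra.
  destruct (Rle_lt_or_eq_dec _ _ HF) as [|HF0]; [assumption|].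
  rewrite <- HF0 in *. nra.
Qed.

Lemma weight_gd_step th th' al :
  (forall i j, (i < 2 * p)%nat -> (j < d)%nat ->
     pv th' i j = pv th i j - al * grad_v L th i j) ->
  (forall i, (i < 2 * p)%nat -> pb th' i = pb th i - al * grad_b L th i) ->
  forall i j, (i < 2 * p)%nat -> (j < S d)%nat ->
    weight d th' i j = weight d th i j - al * g th i j.
Proof.
  intros Hv Hb i j Hi Hj. unfold weight. destruct (Nat.ltb_spec j d).
  - rewrite Hv, grad_v_loss_grad by assumption. reflexivity.
  - replace j with d by lia. rewrite Hb, grad_b_loss_grad by assumption. reflexivity.
Qed.

Definition gd_invariant (L1 F1 A : R) (th : params) : Prop :=
  L th <= L1 /\ L th * A <= L1 /\
  frob_sq p d th * (- ln L1) ^ 4 <= F1 * (- ln (L th)) ^ 4.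

Lemma gd_invariant_step th th' L1 F1 A Q1 Q2 :
  INR n * L1 <= 1/40 -> ln (2 * INR n) + 1 <= 1/20 * - ln L1 -> 50 <= - ln L1 ->
  0 < Q1 -> Q1 <= exp 2 / (120 * INR p) -> 0 < Q2 ->
  216 * F1 * Q2 <= 125 * Q1 * L1 * (- ln L1) ^ 4 -> 1 <= A ->
  (forall i j, (i < 2 * p)%nat -> (j < S d)%nat ->
     weight d th' i j = weight d th i j - Q1 * (- ln (L th)) ^ 2 * g th i j) ->
  gd_invariant L1 F1 A th -> gd_invariant L1 F1 (A + Q2) th'.
Proof.
  intros Hn1 Hlog1 Hl1 HQ1 HQ1b HQ2 HQ2b HA Hstep [HLL1 [HLA Hinv]].
  pose proof INR_n_pos. pose proof INR_p_pos. pose proof (loss_pos th) as HL. pose proof (loss_pos th') as HL'.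
  set (l := - ln (L th)) in *. set (al := Q1 * l ^ 2) in *.
  assert (Hll1 : - ln L1 <= l) by (unfold l; pose proof (ln_le _ _ HL HLL1); lra).
  assert (Hsmall : INR n * L th <= 1/40) by nra.
  assert (Hlog : ln (2 * INR n) + 1 <= 1/20 * l) by lra.
  destruct (large_margin th Hsmall Hlog) as [HS HP].
  assert (Hl : 50 <= l) by lra.
  pose proof (step_size_small (INR p) Q1 (L th) ltac:(lra) HQ1 HQ1b HL ltac:(fold l; lra)) as Hss.
  fold l al in Hss.
  assert (Hal : 0 < al) by (apply Rmult_lt_0_compat; [lra|apply pow_lt; lra]).
  pose proof (loss_descent th th' al Hstep Hal Hss) as Hdesc.
  pose proof (frob_sq_step th th' al Hstep) as HF'.
  pose proof (alignment_sq_le th) as HPFG. pose proof (grad_sq_nonneg th) as HG.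
  pose proof (grad_sq_le_loss th) as HGL.
  assert (HF1 : 0 < F1).
  { pose proof (frob_sq_pos th Hsmall Hlog).
    assert (0 < frob_sq p d th * (- ln L1) ^ 4) by (apply Rmult_lt_0_compat; [|apply pow_lt]; lra).
    assert (0 < l ^ 4) by (apply pow_lt; lra).
    destruct (Rle_lt_dec F1 0); [nra|assumption]. }
  set (D := 3/4 * al * grad_sq th) in *.
  assert (HD : 0 <= D) by (unfold D; nra).
  assert (Hl' : l + D / L th <= - ln (L th')) by (apply neg_ln_decrease; assumption).
  split; [|split].
  - lra.
  - apply (loss_ratio_step (L th) (L th') L1 D A Q2); try lra.
    apply (decrease_lower_bound (L th) l L1 (- ln L1) (frob_sq p d th) F1 (grad_sq th) (alignment th));
      try assumption; lra.
  - apply (frob_ratio_step l (- ln (L th')) (- ln L1) (D / L th) (frob_sq p d th) (frob_sq p d th') F1);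
      try assumption; try lra.
    + apply Rdiv_le_0_compat; lra.
    + apply (frob_growth_le (L th) l _ _ (grad_sq th) (alignment th) al (INR p)); assumption || lra.
Qed.

Lemma gd_invariant_all (theta : nat -> params) Q1 Q2 :
  INR n * L (theta 1%nat) <= 1/40 ->
  ln (2 * INR n) + 1 <= 1/20 * - ln (L (theta 1%nat)) -> 50 <= - ln (L (theta 1%nat)) ->
  0 < Q1 -> Q1 <= exp 2 / (120 * INR p) -> 0 < Q2 ->
  216 * frob_sq p d (theta 1%nat) * Q2
    <= 125 * Q1 * L (theta 1%nat) * (- ln (L (theta 1%nat))) ^ 4 ->
  (forall t, (1 <= t)%nat ->
     let alpha := Q1 * (ln (1 / L (theta t))) ^ 2 in
     (forall i j, (i < 2 * p)%nat -> (j < d)%nat ->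
        pv (theta (S t)) i j = pv (theta t) i j - alpha * grad_v L (theta t) i j) /\
     (forall i, (i < 2 * p)%nat ->
        pb (theta (S t)) i = pb (theta t) i - alpha * grad_b L (theta t) i)) ->
  forall k, gd_invariant (L (theta 1%nat)) (frob_sq p d (theta 1%nat)) (Q2 * INR k + 1) (theta (S k)).
Proof.
  intros Hn1 Hlog1 Hl1 HQ1 HQ1b HQ2 HQ2b Hgd k.
  induction k as [|k IH].
  - unfold gd_invariant. simpl INR. repeat split; lra.
  - rewrite S_INR. replace (Q2 * (INR k + 1) + 1) with (Q2 * INR k + 1 + Q2) by ring.
    pose proof (pos_INR k).
    destruct (Hgd (S k) ltac:(lia)) as [Hv Hb].
    apply (gd_invariant_step (theta (S k)) _ _ _ _ Q1); try assumption; [nra|].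
    rewrite <- ln_1_div by apply loss_pos.
    now apply weight_gd_step.
Qed.

End Convergence.

Theorem theorem1 :
  exists C1 : R, 0 < C1 /\
  forall (n p d : nat) (X : nat -> nat -> R) (Y : nat -> R)
         (theta : nat -> params) (Q1 Q2 : R),
    (2 <= n)%nat -> (1 <= p)%nat -> (1 <= d)%nat ->
    (* dataset on the unit sphere S^{d-1} with labels in {-1,1} *)
    (forall s, (s < n)%nat -> fsum d (fun j => X s j ^ 2) = 1) ->
    (forall s, (s < n)%nat -> Y s = 1 \/ Y s = -1) ->
    let L := loss n p d X Y in
    let L1 := L (theta 1%nat) in
    let V2 := frob_sq p d (theta 1%nat) in
    let Q1t := Rmin (Rmin (1 / (30 * INR p * L1 * (ln (1 / L1)) ^ 2))
                          (108 * V2 / (125 * L1 * (ln (1 / L1)) ^ 4)))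
                    (exp 2 / (120 * INR p)) in
    let Q2t := 125 * Q1 * L1 * (ln (1 / L1)) ^ 4 / (216 * V2) in
    0 < Q1 -> Q1 <= Q1t ->
    0 < Q2 -> Q2 <= Q2t ->
    (* gradient descent with step sizes alpha_t = Q1 log^2(1/L(theta^(t))) *)
    (forall t, (1 <= t)%nat ->
       let alpha := Q1 * (ln (1 / L (theta t))) ^ 2 in
       (forall i j, (i < 2 * p)%nat -> (j < d)%nat ->
          pv (theta (S t)) i j = pv (theta t) i j - alpha * grad_v L (theta t) i j) /\
       (forall i, (i < 2 * p)%nat ->
          pb (theta (S t)) i = pb (theta t) i - alpha * grad_b L (theta t) i)) ->
    L1 <= 1 / Rpower (INR n) (1 + C1) ->
    forall t, (1 <= t)%nat ->
      L (theta t) <= L1 / (Q2 * INR (t - 1) + 1).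
Proof.
  (* [C1 = 100] gives [ln (1/L1) >= 101 ln n >= 50]. *)
  exists 100. split; [lra|].
  intros n p d X Y theta Q1 Q2 Hn Hp _ HX HY L L1 V2 Q1t Q2t HQ1 HQ1t HQ2 HQ2t Hgd Hsmall t Ht.
  assert (Hn1 : (1 <= n)%nat) by lia.
  assert (HL1 : 0 < L1) by (eapply loss_pos; eassumption).
  replace (1 + 100) with 101 in Hsmall by ring.
  destruct (small_loss_regime n L1 Hn HL1 Hsmall) as [Hreg1 [Hreg2 Hreg3]].
  assert (HV2 : 0 < V2) by (eapply frob_sq_pos; eassumption).
  assert (HQ1b : Q1 <= exp 2 / (120 * INR p)) by (eapply Rle_trans; [exact HQ1t|apply Rmin_r]).
  assert (HQ2b : 216 * V2 * Q2 <= 125 * Q1 * L1 * (- ln L1) ^ 4).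
  { unfold Q2t in HQ2t. rewrite ln_1_div in HQ2t by exact HL1.
    apply Rmult_le_compat_l with (r := 216 * V2) in HQ2t; [|lra].
    replace (216 * V2 * (125 * Q1 * L1 * (- ln L1) ^ 4 / (216 * V2)))
      with (125 * Q1 * L1 * (- ln L1) ^ 4) in HQ2t by (field; lra).
    lra. }
  destruct t as [|k]; [lia|]. replace (S k - 1)%nat with k by lia.
  destruct (gd_invariant_all n p d X Y Hn1 Hp HX HY theta Q1 Q2) with (k := k)
    as [_ [Hrate _]]; try assumption.
  pose proof (pos_INR k).
  apply (Rle_div_r (L (theta (S k))) L1 (Q2 * INR k + 1)); [nra|exact Hrate].
Qed.
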